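(* Consider the coded caching problem with a server holding $N=2$ files $A$ and $B$, each of $F$ bits, connected through an error-free shared broadcast link to $K\ge 2$ users, each having a cache of $MF$ bits, where $M=\frac{m}{K}$ for an integer $1\le m\le K-1$. For $L\in\{1,\dots,K-1\}$ let $j^*=\left\lceil m\left(1-\frac{L}{K}\right)\right\rceil$ and $$R_K(M,L)=1+\frac{\sum_{i=\max(0,m-L+1)}^{j^*-1}\binom{K-L}{i}\binom{L-1}{m-i}+\sum_{i=j^*}^{\min(m,K-L-1)}\binom{K-L-1}{i}\binom{L}{m-i}}{\binom{K}{m}},$$ and let $R_K(M)=\max_{0<L<K}R_K(M,L)$. Then, whenever $F$ is a multiple of $\binom{K}{m}$, there exist a placement strategy (each user stores a function of $(A,B)$ of at most $MF$ bits, chosen without knowledge of the demands) and a delivery strategy such that for every demand vector $(d_1,\dots,d_K)\in\{A,B\}^K$ the server broadcasts at most $R_K(M)\,F$ bits and every user $k$ can recover the file $d_k$ from its cache contents and the broadcast. In other words, the memory–rate pair $(M,R_K(M))$ is achievable (worst case over demands).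
   Context: Coded caching setting: in a placement phase, before demands are known, each user's cache is filled with a function of the files of size at most $MF$ bits; in a delivery phase, each user $k$ requests one file $d_k\in\{A,B\}$, the server broadcasts a message (a function of the files and the demands) of at most $RF$ bits to all users, and each user must decode its requested file from the broadcast and its own cache. The pair $(M,R)$ is achievable if this is possible for all demand vectors. Binomial coefficients $\binom{a}{b}$ are $0$ when $b<0$ or $b>a$, and empty sums are $0$. *)

From mathcomp Require Import all_boot all_order all_algebra.
Set Implicit Arguments. Unset Strict Implicit. Unset Printing Implicit Defensive.
Import Order.TTheory GRing.Theory Num.Theory.

Definition file (F : nat) := {ffun 'I_F -> bool}.

(* Demand of a user: [false] = file A, [true] = file B. *)
Definition demand (K : nat) := 'I_K -> bool.

(* j* = ceil (m (1 - L/K)) = ceil (m (K - L) / K), for K > 0. *)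
Definition jstar (K m L : nat) : nat := (m * (K - L) + K.-1) %/ K.

Definition RKL (K m L : nat) : rat :=
  1 + ((\sum_(m.+1 - L <= i < jstar K m L) 'C(K - L, i) * 'C(L - 1, m - i)
      + \sum_(jstar K m L <= i < (minn m (K - L - 1)).+1)
            'C(K - L - 1, i) * 'C(L, m - i))%N)%:R / ('C(K, m))%:R.

(* R_K(M) = max_{0 < L < K} R_K(M, L)  (all terms are >= 1, so 0 is a
   harmless identity for the max). *)
Definition RK (K m : nat) : rat :=
  \big[Num.max/0%R]_(1 <= L < K) RKL K m L.

(* (M, R) with M = m/K achievable for file size F: placement (caches as
   functions of (A,B), of at most M F bits), delivery (broadcast as a function
   of the demands and files, of at most R F bits), and decoding of d_k by user k
   from its cache and the broadcast (the demand vector is known to users). *)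
Definition achievable (K F m : nat) (R : rat) : Prop :=
  exists (cache : 'I_K -> file F -> file F -> seq bool)
         (msg : demand K -> file F -> file F -> seq bool)
         (dec : 'I_K -> demand K -> seq bool -> seq bool -> file F),
    (forall k A B, (size (cache k A B) * K <= m * F)%N) /\
    (forall d A B, ((size (msg d A B))%:R <= R * F%:R :> rat)%R) /\
    (forall d A B k, dec k d (cache k A B) (msg d A B) = if d k then B else A).

(* Split each file into C(K,m) segments X_Z of F / C(K,m) bits, indexed by the
   m-subsets Z of users; user k caches the coded segments A_Z xor B_Z for all Z
   containing k, which is M F bits.  Let D be the set of users demanding A and
   L = K - |D|.  The server sends A_Z uncoded when |Z n D| < j* and B_Z
   otherwise, so user k misses its file exactly on the segments Z, not
   containing k, that lie on the wrong side of j*.  It recovers A_Z xor B_Z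
   from the boundary sum of T = Z + k, the xor of A_(T-x) xor B_(T-x) over
   x in T, whose other terms it has cached.  The server only sends the boundary
   sums of the (m+1)-sets T through a fixed leader a0 of D with |T n D| > j*,
   and through a fixed leader b0 of its complement with |T n D| < j*: since the
   boundary of a boundary vanishes, the boundary sum of any other such T is the
   xor of those of the faces of T + a0 (resp. T + b0) other than T.  Counting
   these sets T gives the second term of R_K(M, L). *)

From mathcomp Require Import all_boot all_order all_algebra.
From mathcomp Require Import zify ring.

Set Implicit Arguments.
Unset Strict Implicit.
Unset Printing Implicit Defensive.

Import Order.TTheory GRing.Theory Num.Theory.

Lemma if_addb_inj (c a b a' b' : bool) :
  (if c then a else b) = (if c then a' else b') -> a (+) b = a' (+) b' ->
  a = a' /\ b = b'.
Proof. by case: c a b a' b' => [] [] [] [] []. Qed.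

Section BoundarySums.
Variable T : finType.
Implicit Types (S : {set T}) (g : {set T} -> bool).

Lemma big_addb_symmetric_pairs S (h : T -> T -> bool) :
  (forall x y, h x y = h y x) ->
  \big[addb/false]_(x in S) \big[addb/false]_(y in S :\ x) h x y = false.
Proof.
move=> hC; pose H x y := [&& x \in S, y \in S, enum_rank y < enum_rank x & h x y].
transitivity (\big[addb/false]_x \big[addb/false]_y (H x y (+) H y x)); last first.
  rewrite (eq_bigr _ (fun x _ => big_split _ _ _ _ _)) big_split /=.
  by rewrite [X in _ (+) X]exchange_big addbb.
rewrite big_mkcond; apply: eq_bigr => x _; case: ifPn => xS; last first.
  by rewrite big1 // => y _; rewrite /H (negbTE xS) andbF.
rewrite big_mkcond; apply: eq_bigr => y _; rewrite /H in_setD1 xS [h y x]hC /=.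
case: (ltngtP (enum_rank y) (enum_rank x)) => [ne|ne|/val_inj/enum_rank_inj->];
  rewrite ?eqxx ?andbF //=.
all: by rewrite (_ : y != x) ?addbF;
  [case: (y \in S) | apply: contraTneq ne => ->; rewrite ltnn].
Qed.

Definition bdry g S : bool := \big[addb/false]_(x in S) g (S :\ x).

Lemma bdry_bdry g S : \big[addb/false]_(x in S) bdry g (S :\ x) = false.
Proof.
apply: (@big_addb_symmetric_pairs S (fun x y => g (S :\ x :\ y))) => x y.
by congr g; apply/setP => z; rewrite !in_setD1 andbCA.
Qed.

Lemma big_addb_eq_term (I : finType) (S : {set I}) (a : I) (f1 f2 : I -> bool) :
  a \in S -> {in S :\ a, f1 =1 f2} ->
  \big[addb/false]_(x in S) f1 x = \big[addb/false]_(x in S) f2 x -> f1 a = f2 a.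
Proof.
move=> aS f12; rewrite !(big_setD1 a aS) (eq_bigr f2) //.
by move/addIb.
Qed.

Lemma eq_face_bdry g1 g2 (k : T) S : k \notin S ->
  {in S, forall x, g1 ((k |: S) :\ x) = g2 ((k |: S) :\ x)} ->
  bdry g1 (k |: S) = bdry g2 (k |: S) -> g1 S = g2 S.
Proof.
move=> kS g12 /(big_addb_eq_term (setU11 k S)); rewrite setU1K //; apply.
exact: g12.
Qed.

Lemma eq_bdry_cone g1 g2 (a : T) S : a \notin S ->
  {in S, forall x, bdry g1 ((a |: S) :\ x) = bdry g2 ((a |: S) :\ x)} ->
  bdry g1 S = bdry g2 S.
Proof.
move=> aS g12.
have bdry0 := etrans (bdry_bdry g1 (a |: S)) (esym (bdry_bdry g2 (a |: S))).
by have := big_addb_eq_term (setU11 a S) _ bdry0; rewrite setU1K //; apply.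
Qed.

End BoundarySums.

Lemma cardsU1I (T : finType) (k : T) (Z D : {set T}) : k \notin Z ->
  #|(k |: Z) :&: D| = (k \in D) + #|Z :&: D|.
Proof.
move=> kZ; rewrite setIUl; case: (boolP (k \in D)) => kD.
  by rewrite (setIidPl _) ?sub1set // cardsU1 !inE (negbTE kZ).
rewrite (_ : [set k] :&: D = set0) ?set0U //.
by apply/setP => y; rewrite !inE; case: eqP => // ->; rewrite (negbTE kD).
Qed.

Section ConeFaces.
Variables (T : finType) (a x : T) (S : {set T}).
Hypotheses (aS : a \notin S) (xS : x \in S).

Lemma cards_cone_face : #|(a |: S) :\ x| = #|S|.
Proof.
have := cardsD1 x (a |: S); rewrite setU1r // cardsU1 aS add1n.
by move=> [].
Qed.

Lemma mem_cone_face : a \in (a |: S) :\ x.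
Proof. by rewrite !inE eqxx andbT; apply: contraNneq aS => ->. Qed.

Lemma card_cone_faceI_ge (D : {set T}) : a \in D ->
  #|S :&: D| <= #|((a |: S) :\ x) :&: D|.
Proof.
move=> aD; have sub : a |: (S :&: D :\ x) \subset ((a |: S) :\ x) :&: D.
  apply/subsetP => y; rewrite !inE; case: eqP => [->|_] /=.
    by rewrite aD !andbT => _; apply: contraNneq aS => ->.
  by case/and3P => -> -> ->.
apply: leq_trans (subset_leq_card sub); rewrite (cardsD1 x) cardsU1 !inE (negbTE aS).
by rewrite andbF leq_add2r leq_b1.
Qed.

Lemma card_cone_faceI_le (D : {set T}) : a \notin D ->
  #|((a |: S) :\ x) :&: D| <= #|S :&: D|.
Proof.
move=> aD; apply/subset_leq_card/subsetP => y.
rewrite !inE => /andP[/andP[_ /predU1P[-> | yS]] yD]; last by rewrite yS.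
by rewrite yD in aD.
Qed.

End ConeFaces.

Lemma jstar_full K m : jstar K m K = 0.
Proof. by rewrite /jstar subnn muln0 add0n; case: K => // K; rewrite divn_small. Qed.

Lemma allpairs_eq_in (S T : eqType) (R : Type) (f g : S -> T -> R) s t :
  [seq f x y | x <- s, y <- t] = [seq g x y | x <- s, y <- t] ->
  {in s & t, f =2 g}.
Proof.
move=> fg x y xs yt; have := allpairs_f (fun x y => (x, y)) xs yt.
apply: (iffRL (eq_in_map (fun z => f z.1 z.2) (fun z => g z.1 z.2) _)).
by rewrite !map_allpairs.
Qed.

Definition draws (T : finType) (B : {set T}) (n : nat) : {set {set T}} :=
  [set A : {set T} | A \subset B & #|A| == n].

Lemma size_enum_draws (T : finType) (B : {set T}) n :
  size (enum (draws B n)) = 'C(#|B|, n).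
Proof. by rewrite -cardE cards_draws. Qed.

Lemma size_flatten_index_iota (X : Type) a b (f : nat -> seq X) :
  size (flatten [seq f i | i <- index_iota a b]) = \sum_(a <= i < b) size (f i).
Proof. by rewrite size_flatten /shape -map_comp sumnE big_map. Qed.

Definition bit F (X : file F) (n : nat) : bool :=
  if insub n is Some i then X i else false.

Lemma bitE F (X : file F) (i : 'I_F) : bit X i = X i.
Proof. by rewrite /bit valK. Qed.

Section Scheme.
Variables (K m s : nat) (k0 : 'I_K).
Implicit Types (Z T : {set 'I_K}) (k : 'I_K) (d : demand K).

Definition segments : seq {set 'I_K} := enum (draws [set: 'I_K] m).

Lemma size_segments : size segments = 'C(K, m).
Proof. by rewrite size_enum_draws cardsT card_ord. Qed.

Lemma mem_segments Z : (Z \in segments) = (#|Z| == m).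
Proof. by rewrite mem_enum inE subsetT. Qed.

Definition pos (p : nat) (Z : {set 'I_K}) : nat := index Z segments * s + p.

Lemma pos_surj i : i < 'C(K, m) * s ->
  exists Z p, [/\ #|Z| = m, p < s & pos p Z = i].
Proof.
move=> lti; have s_gt0 : 0 < s by case: s lti; rewrite ?muln0.
have ltq : i %/ s < 'C(K, m) by rewrite ltn_divLR.
have Zin : nth set0 segments (i %/ s) \in segments by rewrite mem_nth ?size_segments.
exists (nth set0 segments (i %/ s)), (i %% s); split.
- by apply/eqP; rewrite -mem_segments.
- by rewrite ltn_mod.
- by rewrite /pos index_uniq ?size_segments ?enum_uniq // -divn_eq.
Qed.

Definition seg F (X : file F) p Z := bit X (pos p Z).
Definition coded F (A B : file F) p Z := seg A p Z (+) seg B p Z.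

Definition cached_segments (k : 'I_K) : seq {set 'I_K} :=
  [seq k |: Z | Z <- enum (draws [set~ k] m.-1)].

Definition cache F k (A B : file F) : seq bool :=
  [seq coded A B p Z | Z <- cached_segments k, p <- iota 0 s].

Lemma size_cache F k (A B : file F) : size (cache k A B) = 'C(K.-1, m.-1) * s.
Proof.
by rewrite size_allpairs size_iota size_map size_enum_draws cardsC1 card_ord.
Qed.

Lemma mem_cached_segments k Z : k \in Z -> #|Z| = m -> Z \in cached_segments k.
Proof.
move=> kZ cardZ; rewrite -(setD1K kZ); apply: map_f.
rewrite mem_enum inE; apply/andP; split.
  by apply/subsetP => x; rewrite !inE => /andP [].
by have := cardsD1 k Z; rewrite kZ cardZ add1n => ->.
Qed.

Definition demA d : {set 'I_K} := [set x | ~~ d x].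
Definition nB d : nat := #|~: demA d|.

Lemma card_demA d : #|demA d| = K - nB d.
Proof. by rewrite /nB cardsCs card_ord. Qed.

(* With no demand for B every A_Z is sent; with no demand for A, [jstar_full]
   makes every B_Z sent. *)
Definition threshold d : nat := if nB d == 0 then m.+1 else jstar K m (nB d).

Definition sent F d (A B : file F) p Z : bool :=
  if #|Z :&: demA d| < threshold d then seg A p Z else seg B p Z.

Definition leader (D : {set 'I_K}) : 'I_K := odflt k0 [pick x in D].

Lemma leader_in (D : {set 'I_K}) : 0 < #|D| -> leader D \in D.
Proof.
rewrite /leader card_gt0 => /set0Pn[x xD].
by case: pickP => [y ->|/(_ x)]; rewrite ?xD.
Qed.

Definition bdry_setsB d : seq {set 'I_K} :=
  let b0 := leader (~: demA d) in
  flatten [seq [seq b0 |: (U :|: V) | U <- enum (draws (demA d) i),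
                                      V <- enum (draws (~: demA d :\ b0) (m - i))]
          | i <- index_iota (m.+1 - nB d) (jstar K m (nB d))].

Definition bdry_setsA d : seq {set 'I_K} :=
  let a0 := leader (demA d) in
  flatten [seq [seq a0 |: (U :|: V) | U <- enum (draws (demA d :\ a0) i),
                                      V <- enum (draws (~: demA d) (m - i))]
          | i <- index_iota (jstar K m (nB d)) (minn m (K - nB d - 1)).+1].

Definition bdry_sets d : seq {set 'I_K} :=
  if 0 < nB d < K then bdry_setsB d ++ bdry_setsA d else [::].

Definition msg F d (A B : file F) : seq bool :=
  [seq sent d A B p Z | Z <- segments, p <- iota 0 s] ++
  [seq bdry (coded A B p) T | T <- bdry_sets d, p <- iota 0 s].

(* User k outputs the demanded file of any pair of files consistent with what
   it receives; [cache_msg_determine_demanded] makes this the right one. *)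
Definition decoder F k d (c M : seq bool) : file F :=
  if [pick AB : file F * file F | (cache k AB.1 AB.2 == c) && (msg d AB.1 AB.2 == M)]
    is Some AB then (if d k then AB.2 else AB.1) else [ffun=> false].

Lemma size_bdry_sets d : 0 < nB d < K ->
  size (bdry_sets d) =
    \sum_(m.+1 - nB d <= i < jstar K m (nB d)) 'C(K - nB d, i) * 'C(nB d - 1, m - i)
  + \sum_(jstar K m (nB d) <= i < (minn m (K - nB d - 1)).+1)
        'C(K - nB d - 1, i) * 'C(nB d, m - i).
Proof.
move=> /[dup] /andP[L_gt0 L_ltK] L_range.
have b0in := leader_in L_gt0.
have a0in : leader (demA d) \in demA d by rewrite leader_in // card_demA subn_gt0.
rewrite /bdry_sets L_range size_cat !size_flatten_index_iota.
congr (_ + _); apply: eq_bigr => i _; rewrite size_allpairs !size_enum_draws.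
  have := cardsD1 (leader (~: demA d)) (~: demA d); rewrite b0in -/(nB d).
  by rewrite card_demA => ->; rewrite add1n subn1.
have := cardsD1 (leader (demA d)) (demA d).
by rewrite a0in card_demA add1n => ->; rewrite subn1.
Qed.

Lemma size_msg F d (A B : file F) :
  size (msg d A B) = 'C(K, m) * s + size (bdry_sets d) * s.
Proof. by rewrite size_cat !size_allpairs size_iota size_segments. Qed.

Lemma mem_bdry_setsA d T : 0 < nB d < K -> #|T| = m.+1 ->
  leader (demA d) \in T -> jstar K m (nB d) < #|T :&: demA d| -> T \in bdry_sets d.
Proof.
move=> /[dup] /andP[_ L_ltK] L_range cardT a0T above.
have a0in : leader (demA d) \in demA d by rewrite leader_in // card_demA subn_gt0.
rewrite /bdry_sets L_range mem_cat /bdry_setsA; apply/orP; right.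
set a0 := leader (demA d) in a0T a0in *.
set U := T :&: demA d :\ a0; set V := T :&: ~: demA d.
have defT : T = a0 |: (U :|: V).
  apply/setP => x; rewrite !inE; case: eqP => [->//|_].
  by case: (x \in T); case: (d x).
have cardTD : #|T :&: demA d| = #|U|.+1 by rewrite (cardsD1 a0) inE a0T a0in.
have cardUV : #|T :&: demA d| + #|V| = #|T| by rewrite -(cardsID (demA d) T) setDE.
have sUD : U \subset demA d :\ a0 by apply/setSD/subsetIr.
have cardD : #|demA d :\ a0| = K - nB d - 1.
  by have := cardsD1 a0 (demA d); rewrite a0in card_demA add1n => ->; rewrite subn1.
have cardU := subset_leq_card sUD; rewrite cardD in cardU.
have cardV : #|V| = m - #|U| by lia.
apply/flatten_mapP; exists #|U|.
  by rewrite mem_index_iota ltnS leq_min; apply/and3P; split; lia.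
by rewrite {1}defT; apply: allpairs_f; rewrite mem_enum inE ?sUD ?subsetIr ?cardV /=.
Qed.

Lemma mem_bdry_setsB d T : 0 < nB d < K -> #|T| = m.+1 ->
  leader (~: demA d) \in T -> #|T :&: demA d| < jstar K m (nB d) -> T \in bdry_sets d.
Proof.
move=> /[dup] /andP[L_gt0 _] L_range cardT b0T below.
have b0in : leader (~: demA d) \in ~: demA d by rewrite leader_in.
rewrite /bdry_sets L_range mem_cat /bdry_setsB; apply/orP; left.
set b0 := leader (~: demA d) in b0T b0in *.
set U := T :&: demA d in below *; set V := T :&: ~: demA d :\ b0.
have defT : T = b0 |: (U :|: V).
  apply/setP => x; rewrite !inE; case: eqP => [->//|_].
  by case: (x \in T); case: (d x).
have cardTD : #|T :&: ~: demA d| = #|V|.+1 by rewrite (cardsD1 b0) inE b0T b0in.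
have cardUV : #|U| + #|T :&: ~: demA d| = #|T| by rewrite -(cardsID (demA d) T) setDE.
have sVD : V \subset ~: demA d :\ b0 by apply/setSD/subsetIr.
have cardD : #|~: demA d :\ b0| = nB d - 1.
  by have := cardsD1 b0 (~: demA d); rewrite b0in -/(nB d) add1n => ->; rewrite subn1.
have leV := subset_leq_card sVD; rewrite cardD in leV.
have cardV : #|V| = m - #|U| by lia.
apply/flatten_mapP; exists #|U|.
  by rewrite mem_index_iota; apply/andP; split; lia.
by rewrite {1}defT; apply: allpairs_f; rewrite mem_enum inE ?sVD ?subsetIr ?cardV /=.
Qed.

Section Decoding.
Variables (F : nat) (d : demand K) (k : 'I_K) (A B A' B' : file F).
Hypotheses (same_cache : cache k A B = cache k A' B')
           (same_msg : msg d A B = msg d A' B').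

Lemma coded_eq_cached p Z : k \in Z -> #|Z| = m -> p < s ->
  coded A B p Z = coded A' B' p Z.
Proof.
move=> kZ cardZ ltps.
by apply: (allpairs_eq_in same_cache) (mem_cached_segments kZ cardZ) _; rewrite mem_iota.
Qed.

Let same_msg_parts :
  [seq sent d A B p Z | Z <- segments, p <- iota 0 s] =
    [seq sent d A' B' p Z | Z <- segments, p <- iota 0 s] /\
  [seq bdry (coded A B p) T | T <- bdry_sets d, p <- iota 0 s] =
    [seq bdry (coded A' B' p) T | T <- bdry_sets d, p <- iota 0 s].
Proof.
move/eqP: same_msg; rewrite eqseq_cat; last by rewrite !size_allpairs.
by case/andP => /eqP-> /eqP->.
Qed.

Lemma sent_eq p Z : #|Z| = m -> p < s -> sent d A B p Z = sent d A' B' p Z.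
Proof.
move=> cardZ ltps; apply: (allpairs_eq_in same_msg_parts.1); last by rewrite mem_iota.
by rewrite mem_segments cardZ.
Qed.

Lemma bdry_eq_sent p T : T \in bdry_sets d -> p < s ->
  bdry (coded A B p) T = bdry (coded A' B' p) T.
Proof.
by move=> Tin ltps; apply: (allpairs_eq_in same_msg_parts.2) Tin _; rewrite mem_iota.
Qed.

Lemma bdry_eq_above p T : 0 < nB d < K -> #|T| = m.+1 ->
  jstar K m (nB d) < #|T :&: demA d| -> p < s ->
  bdry (coded A B p) T = bdry (coded A' B' p) T.
Proof.
move=> /[dup] /andP[_ L_ltK] L_range cardT above ltps.
have a0in : leader (demA d) \in demA d by rewrite leader_in // card_demA subn_gt0.
have [a0T|a0T] := boolP (leader (demA d) \in T).
  by apply: bdry_eq_sent => //; apply: mem_bdry_setsA.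
apply: (eq_bdry_cone a0T) => x xT; apply: bdry_eq_sent => //.
apply: mem_bdry_setsA; rewrite ?cards_cone_face ?mem_cone_face //.
exact: leq_trans above (card_cone_faceI_ge _ _ _).
Qed.

Lemma bdry_eq_below p T : 0 < nB d < K -> #|T| = m.+1 ->
  #|T :&: demA d| < jstar K m (nB d) -> p < s ->
  bdry (coded A B p) T = bdry (coded A' B' p) T.
Proof.
move=> /[dup] /andP[L_gt0 _] L_range cardT below ltps.
have b0in : leader (~: demA d) \in ~: demA d by rewrite leader_in.
have [b0T|b0T] := boolP (leader (~: demA d) \in T).
  by apply: bdry_eq_sent => //; apply: mem_bdry_setsB.
apply: (eq_bdry_cone b0T) => x xT; apply: bdry_eq_sent => //.
apply: mem_bdry_setsB; rewrite ?cards_cone_face ?mem_cone_face //.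
by apply: leq_ltn_trans below; apply: card_cone_faceI_le; rewrite -in_setC.
Qed.

Lemma coded_eq_unsent p Z : k \notin Z -> #|Z| = m -> p < s ->
  (#|Z :&: demA d| < threshold d) = d k -> coded A B p Z = coded A' B' p Z.
Proof.
move=> kZ cardZ ltps unsent.
have cardkZ : #|k |: Z| = m.+1 by rewrite cardsU1 kZ cardZ.
apply: (eq_face_bdry kZ).
  (* the faces of k |: Z other than Z contain k, so they are cached *)
  by move=> x xZ; apply: coded_eq_cached; rewrite ?mem_cone_face ?cards_cone_face.
have := cardsU1I (demA d) kZ; rewrite inE; move: unsent; rewrite /threshold.
case dk: (d k) => /= unsent cardkZD.
  have L_gt0 : 0 < nB d by apply/card_gt0P; exists k; rewrite !inE dk.
  have L_leK : nB d <= K by rewrite -[K]card_ord max_card.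
  move: unsent; rewrite eqn0Ngt L_gt0 /=.
  case: (ltngtP (nB d) K) L_leK => // [L_ltK _ below|-> _]; last by rewrite jstar_full.
  by apply: bdry_eq_below; rewrite ?L_gt0 ?L_ltK ?cardkZD.
have L_ltK : nB d < K.
  by rewrite -subn_gt0 -card_demA; apply/card_gt0P; exists k; rewrite !inE dk.
have leZ : #|Z :&: demA d| <= m by rewrite -cardZ subset_leq_card ?subsetIl.
move: unsent; case: eqP => [_|/eqP L_neq0]; first by rewrite ltnS leZ.
move/negbT; rewrite -leqNgt => above.
by apply: bdry_eq_above; rewrite ?lt0n ?L_neq0 ?cardkZD.
Qed.

Lemma seg_demanded_eq p Z : #|Z| = m -> p < s ->
  seg (if d k then B else A) p Z = seg (if d k then B' else A') p Z.
Proof.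
move=> cardZ ltps; have := sent_eq cardZ ltps; rewrite /sent.
have [unsent|] := eqVneq (#|Z :&: demA d| < threshold d) (d k).
  have coded_eq : coded A B p Z = coded A' B' p Z.
    have [kZ|kZ] := boolP (k \in Z).
      exact: coded_eq_cached.
    exact: coded_eq_unsent.
  by rewrite unsent => /if_addb_inj/(_ coded_eq)[]; case: (d k).
by case: (d k); case: (_ < _).
Qed.

Lemma cache_msg_determine_demanded : F = 'C(K, m) * s ->
  (if d k then B else A) = (if d k then B' else A').
Proof.
move=> defF; apply/ffunP => i; have lti : i < 'C(K, m) * s by rewrite -defF.
have [Z [p [cardZ ltps posi]]] := pos_surj lti.
by have := seg_demanded_eq cardZ ltps; rewrite /seg posi !bitE.
Qed.

End Decoding.

Lemma decoderE F k d (A B : file F) : F = 'C(K, m) * s ->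
  decoder F k d (cache k A B) (msg d A B) = if d k then B else A.
Proof.
rewrite /decoder => defF.
case: pickP => [[A' B'] /andP[/eqP same_cache /eqP same_msg] | none].
  exact: cache_msg_determine_demanded.
by have := none (A, B); rewrite /= !eqxx.
Qed.

End Scheme.

Lemma size_cache_mul K m s F (k : 'I_K) (A B : file F) : 0 < m ->
  size (cache m s k A B) * K = m * ('C(K, m) * s).
Proof.
move=> m_gt0; have bin_diag : K * 'C(K.-1, m.-1) = m * 'C(K, m).
  by rewrite mul_bin_diag prednK.
by rewrite size_cache mulnAC [_ * K]mulnC bin_diag mulnA.
Qed.

Lemma RKL_ge1 K m L : (1 <= RKL K m L)%R.
Proof. by rewrite /RKL lerDl divr_ge0 ?ler0n. Qed.

Lemma RKL_le_RK K m L : 0 < L < K -> (RKL K m L <= RK K m)%R.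
Proof. by move=> L_range; apply: (bigmax_sup_seq _ L); rewrite ?mem_index_iota. Qed.

Lemma RK_ge1 K m : 2 <= K -> (1 <= RK K m)%R.
Proof. by move=> K_ge2; apply: le_trans (RKL_ge1 K m 1) (RKL_le_RK _ _). Qed.

Lemma RKL_mulE K m L s : m <= K ->
  (RKL K m L * ('C(K, m) * s)%:R =
  ('C(K, m) * s
   + (\sum_(m.+1 - L <= i < jstar K m L) 'C(K - L, i) * 'C(L - 1, m - i)
      + \sum_(jstar K m L <= i < (minn m (K - L - 1)).+1)
          'C(K - L - 1, i) * 'C(L, m - i)) * s)%:R)%R.
Proof.
move=> m_leK.
have C_neq0 : ('C(K, m)%:R != 0 :> rat)%R by rewrite pnatr_eq0 -lt0n bin_gt0.
by rewrite /RKL natrD !natrM; field.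
Qed.

Lemma size_msg_le K m s (k0 : 'I_K) F d (A B : file F) : 2 <= K -> m <= K ->
  ((size (msg m s k0 d A B))%:R <= RK K m * ('C(K, m) * s)%:R)%R.
Proof.
move=> K_ge2 m_leK; rewrite size_msg.
case: (boolP (0 < nB d < K)) => [L_range|L_out].
  rewrite size_bdry_sets // -RKL_mulE // ler_wpM2r ?ler0n //.
  exact: RKL_le_RK.
rewrite /bdry_sets (negbTE L_out) mul0n addn0 -[X in (X <= _)%R]mul1r.
by rewrite ler_wpM2r ?ler0n ?RK_ge1.
Qed.

Theorem mainTheorem1 (K m F : nat) :
  (2 <= K)%N -> (1 <= m)%N -> (m <= K - 1)%N -> ('C(K, m) %| F)%N ->
  achievable K F m (RK K m).
Proof.
move=> K_ge2 m_gt0 m_lt Cdvd; set s := F %/ 'C(K, m).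
have defF : F = 'C(K, m) * s by rewrite mulnC divnK.
have K_gt0 : 0 < K by apply: leq_trans K_ge2.
have m_leK : m <= K by apply: leq_trans m_lt (leq_subr _ _).
pose k0 : 'I_K := Ordinal K_gt0.
exists (cache m s (F := F)), (msg m s k0 (F := F)), (decoder m s k0 F).
split; [|split].
- by move=> k A B; rewrite size_cache_mul // -defF.
- by move=> d A B; have := size_msg_le s k0 d A B K_ge2 m_leK; rewrite -defF.
- by move=> d A B k; apply: decoderE.
Qed.
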